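(* Let $R$ be an associative ring with identity and let $\mathbf{L}$ be an exact sequence (unbounded in both directions) of finitely generated free left $R$-modules. The following are equivalent: (1) $\mathbf{L}$ is a complete resolution by finitely generated free left $R$-modules, i.e. the complex $\mathrm{Hom}_R(\mathbf{L},R)$ is exact; (2) $\mathbf{L}$ is a complete projective resolution, i.e. $\mathrm{Hom}_R(\mathbf{L},Q)$ is exact for every projective left $R$-module $Q$; (3) $\mathbf{L}$ is a complete flat resolution, i.e. $I\otimes_R\mathbf{L}$ is exact for every injective right $R$-module $I$. *)

From HB Require Import structures.
From mathcomp Require Import all_boot all_algebra.
Set Implicit Arguments. Unset Strict Implicit. Unset Printing Implicit Defensive.
Import GRing.Theory.
Local Open Scope ring_scope.

(* A complex of finitely generated free left R-modules, unbounded in both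
   directions: L_i = R^(n i) (row vectors 'rV[R]_(n i)), differential
   d_{i+1} : L_{i+1} -> L_i given by v |-> v *m D i  (left R-linear maps
   R^a -> R^b are exactly right multiplications by a x b matrices). *)

Definition exact_free (R : pzRingType) (n : int -> nat)
    (D : forall i : int, 'M[R]_(n (i + 1), n i)) : Prop :=
  forall i : int,
    (forall u : 'rV[R]_(n (i + 1 + 1)), (u *m D (i + 1)) *m D i = 0) /\
    (forall v : 'rV[R]_(n (i + 1)), v *m D i = 0 ->
       exists u : 'rV[R]_(n (i + 1 + 1)), u *m D (i + 1) = v).

Definition Rlinear (R : pzRingType) (M N : lmodType R) (f : M -> N) : Prop :=
  forall (a : R) (x y : M), f (a *: x + y) = a *: f x + f y.

Definition hom_exact (R : pzRingType) (n : int -> nat)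
    (D : forall i : int, 'M[R]_(n (i + 1), n i)) (Q : lmodType R) : Prop :=
  forall i : int,
    (forall f : 'rV[R]_(n i) -> Q, Rlinear f ->
       forall u : 'rV[R]_(n (i + 1 + 1)), f ((u *m D (i + 1)) *m D i) = 0) /\
    (forall g : 'rV[R]_(n (i + 1)) -> Q, Rlinear g ->
       (forall u : 'rV[R]_(n (i + 1 + 1)), g (u *m D (i + 1)) = 0) ->
       exists f : 'rV[R]_(n i) -> Q, Rlinear f /\
         forall v : 'rV[R]_(n (i + 1)), g v = f (v *m D i)).

Definition projective_lmod (R : pzRingType) (Q : lmodType R) : Prop :=
  forall (M N : lmodType R) (p : M -> N) (g : Q -> N),
    Rlinear p -> (forall y : N, exists x : M, p x = y) -> Rlinear g ->
    exists h : Q -> M, Rlinear h /\ forall q : Q, p (h q) = g q.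

(* Right R-modules are left modules over the converse ring R^c:
   the right action x.r is written (r : R^c) *: x. *)
Definition injective_rmod (R : pzRingType) (I : lmodType R^c) : Prop :=
  forall (M N : lmodType R^c) (j : M -> N) (g : M -> I),
    Rlinear j -> injective j -> Rlinear g ->
    exists h : N -> I, Rlinear h /\ forall m : M, h (j m) = g m.

(* I (x)_R L, using I (x)_R R^k = I^k: the differential
   I^(n (i+1)) -> I^(n i) is x |-> (j |-> sum_k x_k . D i k j). *)
Definition tens_map (R : pzRingType) (I : lmodType R^c) (a b : nat)
    (A : 'M[R]_(a, b)) (x : 'I_a -> I) : 'I_b -> I :=
  fun j => \sum_(k < a) (A k j : R^c) *: x k.

Definition tensor_exact (R : pzRingType) (n : int -> nat)
    (D : forall i : int, 'M[R]_(n (i + 1), n i)) (I : lmodType R^c) : Prop :=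
  forall i : int,
    (forall u : 'I_(n (i + 1 + 1)) -> I,
       forall j, tens_map (D i) (tens_map (D (i + 1)) u) j = 0) /\
    (forall x : 'I_(n (i + 1)) -> I, (forall j, tens_map (D i) x j = 0) ->
       exists u : 'I_(n (i + 1 + 1)) -> I,
         forall k, tens_map (D (i + 1)) u k = x k).

From HB Require Import structures.
From mathcomp Require Import all_boot all_order all_algebra.
From mathcomp Require Import lra zify.
From mathcomp Require Import boolp classical_sets functions.
Set Implicit Arguments. Unset Strict Implicit. Unset Printing Implicit Defensive.
Import GRing.Theory Num.Theory Order.TTheory.
Local Open Scope ring_scope.

(* Write Hom_R(L_i, Q) as Q^(n i) through the values on the standard basis: the
   differential becomes y |-> D_i y, and exactness of Hom_R(L, Q) becomes
   [dual_exact D Q].  For Q = R it is exactness of the complex of columns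
   b |-> D_i b, and all three conditions reduce to it.
   (1) <-> (2): column exactness passes to free modules coordinatewise, and from
   them to their retracts, the projective modules.
   (1) -> (3): for the right module of columns, I (x)_R L_i = I^(n i) is
   Hom_R(R^(n i), I).  A cycle x vanishes on the boundaries D_i b, hence on all
   columns c with D_(i+1) c = 0; so it factors through c |-> D_(i+1) c, and
   injectivity of I extends it from the image to R^(n (i+2)).
   (3) -> (1): if a column cycle c is not a boundary, a Q/Z-valued additive
   map H separates c from the boundaries (Q/Z is a divisible cogenerator; the
   extension uses Zorn's lemma).  Then r |-> H (r e_k) is a cycle of
   R^+ (x) L, with R^+ = Hom_Z(R, Q/Z) the injective character module; it is
   not a boundary, since boundaries pair to 0 with the cycle c while x pairs to
   H c <> 0. *)

(** * Coordinates *)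

Section LeftLinear.
Variables (K : pzRingType) (M N : lmodType K) (f : M -> N).
Hypothesis f_lin : Rlinear f.

Let fL : {linear M -> N} := HB.pack f (GRing.isLinear.Build K M N *:%R f f_lin).

Lemma Rlinear0 : f 0 = 0. Proof. exact: raddf0 fL. Qed.
Lemma RlinearB x y : f (x - y) = f x - f y. Proof. exact: (raddfB fL x y). Qed.
Lemma RlinearZ a x : f (a *: x) = a *: f x. Proof. exact: (linearZZ fL a x). Qed.
Lemma Rlinear_sum I (r : seq I) (P : pred I) (F : I -> M) :
  f (\sum_(i <- r | P i) F i) = \sum_(i <- r | P i) f (F i).
Proof. exact: (raddf_sum fL). Qed.

End LeftLinear.

Section Combinations.
Variables (K : pzRingType) (M : lmodType K).

Definition mxact m p (A : 'M[K]_(m, p)) (y : 'I_p -> M) : 'I_m -> M :=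
  fun k => \sum_j A k j *: y j.

Definition rowcomb k (v : 'rV[K]_k) (y : 'I_k -> M) : M := \sum_j v 0 j *: y j.

Lemma rowcomb_linear k (y : 'I_k -> M) : Rlinear (fun v : 'rV[K]_k => rowcomb v y).
Proof.
move=> a v w; rewrite /rowcomb scaler_sumr -big_split.
by apply: eq_bigr => j _; rewrite !mxE scalerDl scalerA.
Qed.

Lemma Rlinear_rowcomb k (f : 'rV[K]_k -> M) :
  Rlinear f -> forall v, f v = rowcomb v (fun j => f 'e_j).
Proof.
move=> f_lin v; rewrite {1}(row_sum_delta v) (Rlinear_sum f_lin).
by apply: eq_bigr => j _; rewrite (RlinearZ f_lin).
Qed.

Lemma rowcomb_delta k (j : 'I_k) y : rowcomb 'e_j y = y j.
Proof.
rewrite /rowcomb (bigD1 j) //= mxE !eqxx scale1r big1 ?addr0 // => l lj.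
by rewrite mxE eqxx (negbTE lj) scale0r.
Qed.

Lemma mxactM m p r (A : 'M[K]_(m, p)) (B : 'M[K]_(p, r)) y :
  mxact A (mxact B y) =1 mxact (A *m B) y.
Proof.
move=> k; rewrite /mxact; under eq_bigr do rewrite scaler_sumr.
rewrite exchange_big; apply: eq_bigr => j _; rewrite mxE scaler_suml.
by apply: eq_bigr => l _; rewrite scalerA.
Qed.

Lemma rowcomb_mul m p (v : 'rV[K]_m) (A : 'M[K]_(m, p)) y :
  rowcomb (v *m A) y = rowcomb v (mxact A y).
Proof. by have := mxactM v A y 0; rewrite /mxact /rowcomb => ->. Qed.

Lemma mxact_row m p (A : 'M[K]_(m, p)) y l : mxact A y l = rowcomb ('e_l *m A) y.
Proof. by rewrite rowcomb_mul rowcomb_delta. Qed.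

End Combinations.

Lemma Rlinear_mxact (K : pzRingType) (M N : lmodType K) (f : M -> N) m p
    (A : 'M[K]_(m, p)) (y : 'I_p -> M) :
  Rlinear f -> mxact A (f \o y) =1 f \o mxact A y.
Proof.
move=> f_lin k; rewrite /= /mxact (Rlinear_sum f_lin).
by apply: eq_bigr => j _; rewrite (RlinearZ f_lin).
Qed.

Section Single.
Variables (M : zmodType) (m : nat).

Definition single (k : 'I_m) (x : M) : 'I_m -> M := fun l => if l == k then x else 0.

Lemma single_is_zmod_morphism k : zmod_morphism (single k).
Proof.
by move=> x y; apply: funext => l; rewrite /single !fctE; case: ifP; rewrite ?subr0.
Qed.

HB.instance Definition _ k := GRing.isZmodMorphism.Build M _ (single k)
  (single_is_zmod_morphism k).

Lemma sum_single (c : 'I_m -> M) : \sum_k single k (c k) = c.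
Proof.
apply: funext => l; rewrite fct_sumE (bigD1 l) //= /single eqxx big1 ?addr0 // => k.
by rewrite eq_sym => /negbTE ->.
Qed.

End Single.

Section DualExactness.
Variables (R : pzRingType) (n : int -> nat) (D : forall i : int, 'M[R]_(n (i + 1), n i)).

Definition dual_exact (Q : lmodType R) := forall i (x : 'I_(n (i + 1)) -> Q),
  (forall l, mxact (D (i + 1)) x l = 0) -> exists y, forall k, x k = mxact (D i) y k.

Lemma dual_exact_retract (M Q : lmodType R) (p : M -> Q) (h : Q -> M) :
  Rlinear p -> Rlinear h -> cancel h p -> dual_exact M -> dual_exact Q.
Proof.
move=> p_lin h_lin hK dualM i x x_cycle.
have [|y xy] := dualM i (h \o x).
  by move=> l; rewrite Rlinear_mxact //= x_cycle (Rlinear0 h_lin).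
by exists (p \o y) => k; rewrite Rlinear_mxact //= -xy hK.
Qed.

Hypothesis L_exact : exact_free D.

Lemma exact_free_mul0 i : D (i + 1) *m D i = 0.
Proof. by apply/row_matrixP => l; rewrite row0 rowE mulmxA; exact: (L_exact i).1. Qed.

Lemma hom_exact_dual (Q : lmodType R) : hom_exact D Q <-> dual_exact Q.
Proof.
split=> [hom i x x_cycle | dual i].
  have g_bound u : rowcomb (u *m D (i + 1)) x = 0.
    by rewrite rowcomb_mul /rowcomb big1 // => l _; rewrite x_cycle scaler0.
  have [f [f_lin gf]] := (hom i).2 _ (rowcomb_linear x) g_bound.
  exists (fun j => f 'e_j) => k.
  by rewrite -[x k]rowcomb_delta gf (Rlinear_rowcomb f_lin) rowcomb_mul rowcomb_delta.
split=> [f f_lin u | g g_lin g_bound].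
  by rewrite -mulmxA exact_free_mul0 mulmx0 (Rlinear0 f_lin).
have [|y xy] := dual i (fun k => g 'e_k).
  by move=> l; rewrite mxact_row -(Rlinear_rowcomb g_lin) g_bound.
exists (fun w => rowcomb w y); split; first exact: rowcomb_linear.
move=> v; rewrite (Rlinear_rowcomb g_lin) rowcomb_mul.
by apply: eq_bigr => k _; rewrite xy.
Qed.

End DualExactness.

(** * Projective modules *)

Section FreeModule.
Variables (R : pzRingType) (S : choiceType).

Definition covers (f : S -> R) (s : seq S) := forall q, f q != 0 -> q \in s.

Definition finsupp : {pred S -> R^o} := fun f => `[< exists s, covers f s >].

Lemma finsupp_submod_closed : submod_closed finsupp.
Proof.
split; first by apply/asboolP; exists [::] => q; rewrite eqxx.
move=> a f g /asboolP[s fs] /asboolP[t gt]; apply/asboolP; exists (s ++ t) => q.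
change (a * f q + g q != 0 -> q \in s ++ t); rewrite mem_cat.
have [->|/fs -> //] := eqVneq (f q) 0.
by rewrite mulr0 add0r => /gt ->; rewrite orbT.
Qed.

HB.instance Definition _ := GRing.isSubmodClosed.Build R (S -> R^o) finsupp
  finsupp_submod_closed.

Record free := Free { free_val :> S -> R^o; _ : free_val \in finsupp }.

HB.instance Definition _ := [isSub for free_val].
HB.instance Definition _ := [Choice of free by <:].
HB.instance Definition _ := [SubChoice_isSubLmodule of free by <:].

Lemma free_coord_linear q : Rlinear (fun f : free => f q).
Proof. by []. Qed.

Lemma free_covers (f : free) : exists s, covers f s.
Proof. by case: f => f fP; apply/asboolP. Qed.

Lemma free_mxactE m p (A : 'M[R]_(m, p)) (z : 'I_p -> free) k q :
  mxact A z k q = mxact A (fun j => z j q) k.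
Proof. by rewrite (Rlinear_mxact A z (free_coord_linear q)). Qed.

End FreeModule.
Arguments finsupp {R S}.

Section FreeCover.
Variables (R : pzRingType) (Q : lmodType R).

Lemma covers_sum_eq (f : Q -> R) s t : uniq s -> uniq t -> covers f s -> covers f t ->
  \sum_(q <- s) f q *: q = \sum_(q <- t) f q *: q.
Proof.
have restrict a b : covers f b ->
    \sum_(q <- a) f q *: q = \sum_(q <- a | q \in b) f q *: q.
  move=> fb; rewrite [RHS]big_mkcond; apply: eq_bigr => q _.
  by case: ifP => // qb; have [->|/fb] := eqVneq (f q) 0; rewrite ?scale0r ?qb.
move=> us ut fs ft; rewrite (restrict s t) // (restrict t s) //.
rewrite -[LHS]big_filter -[RHS]big_filter; apply/perm_big/uniq_perm.
- exact: filter_uniq.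
- exact: filter_uniq.
- by move=> q; rewrite !mem_filter andbC.
Qed.

Definition free_sum (f : free R Q) : Q :=
  \sum_(q <- undup (projT1 (cid (free_covers f)))) (f q : R) *: q.

Lemma free_sumE (f : free R Q) s :
  uniq s -> covers f s -> free_sum f = \sum_(q <- s) (f q : R) *: q.
Proof.
move=> us fs; apply: covers_sum_eq; rewrite ?undup_uniq // /free_sum.
by case: cid => t ft q /ft; rewrite mem_undup.
Qed.

Lemma free_sum_linear : Rlinear free_sum.
Proof.
move=> a f g; have [s fs] := free_covers f; have [t gt] := free_covers g.
set u := undup (s ++ t).
have fu : covers f u by move=> q /fs; rewrite mem_undup mem_cat => ->.
have gu : covers g u by move=> q /gt; rewrite mem_undup mem_cat orbC => ->.
have fgu : covers (a *: f + g) u.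
  move=> q; rewrite (free_coord_linear q).
  by have [->|/fu //] := eqVneq (f q) 0; rewrite scaler0 add0r => /gu.
rewrite !(@free_sumE _ u) ?undup_uniq // scaler_sumr -big_split.
by apply: eq_bigr => q _; rewrite (free_coord_linear q) scalerDl scalerA.
Qed.

Lemma free_delta_finsupp (q0 : Q) : (fun q => (q == q0)%:R : R^o) \in finsupp.
Proof.
apply/asboolP; exists [:: q0] => q; rewrite mem_seq1.
by case: (q =P q0) => // _; rewrite eqxx.
Qed.

Definition free_delta q0 := Free (free_delta_finsupp q0).

Lemma free_sum_delta q0 : free_sum (free_delta q0) = q0.
Proof.
rewrite (@free_sumE _ [:: q0]) ?big_seq1 /= ?eqxx ?scale1r //.
by move=> q; rewrite mem_seq1; case: (q =P q0) => // _; rewrite eqxx.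
Qed.

Lemma projective_free_retract :
  projective_lmod Q -> exists h : Q -> free R Q, Rlinear h /\ cancel h free_sum.
Proof.
move=> Q_proj; apply: Q_proj free_sum_linear _ _ => [q|]; last by [].
by exists (free_delta q); exact: free_sum_delta.
Qed.

End FreeCover.

Lemma regular_projective (R : pzRingType) : projective_lmod R^o.
Proof.
move=> M N p g p_lin p_surj g_lin; have [m pm] := p_surj (g 1).
exists (fun r : R^o => (r : R) *: m); split.
  by move=> a r s; rewrite scalerDl scalerA.
by move=> r; rewrite (RlinearZ p_lin) pm -(RlinearZ g_lin) [_ *: _]mulr1.
Qed.

Lemma dual_exact_free (R : pzRingType) (n : int -> nat)
    (D : forall i : int, 'M[R]_(n (i + 1), n i)) (S : choiceType) :
  dual_exact D R^o -> dual_exact D (free R S).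
Proof.
move=> dualR i x x_cycle.
pose col q k : R^o := x k q.
have col_cycle q l : mxact (D (i + 1)) (col q) l = 0.
  by rewrite -free_mxactE x_cycle.
(* the zero column gets the zero preimage, which keeps the supports finite *)
pose y q : 'I_(n i) -> R^o := if `[< forall k, col q k = 0 >] then 0
  else projT1 (cid (dualR i _ (col_cycle q))).
have col_y q k : col q k = mxact (D i) (y q) k.
  rewrite /y; case: asboolP => [col0|_]; last by case: cid => b /=; apply.
  by rewrite col0 /mxact big1 // => j _; exact: scaler0.
have y_finsupp j : (fun q => y q j) \in finsupp.
  apply/asboolP.
  exists (flatten [seq projT1 (cid (free_covers (x k))) | k <- enum 'I_(n (i + 1))]).
  move=> q yqj; have [[k xkq]|col0] := pselect (exists k, col q k != 0).
    by apply/flatten_mapP; exists k; rewrite ?mem_enum //; case: cid => s; apply.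
  move: yqj; rewrite /y; case: asboolP => [_|col_nz _]; first by rewrite eqxx.
  by exfalso; apply: col_nz => k; apply/eqP/negPn/negP => ?; apply: col0; exists k.
exists (fun j => Free (y_finsupp j)) => k; apply: val_inj; apply: funext => q.
by rewrite /= free_mxactE -col_y.
Qed.

(** * Q/Z and the character module *)

Definition frac (x : rat) : rat := x - (Num.floor x)%:~R.

Lemma frac_ge0 x : 0 <= frac x.
Proof. by rewrite subr_ge0 floor_le. Qed.

Lemma frac_lt1 x : frac x < 1.
Proof. by rewrite ltrBlDr addrC; have := lt_succ_floor x; rewrite intrD. Qed.

Lemma fracDz x (m : int) : frac (x + m%:~R) = frac x.
Proof. by rewrite /frac floorDrz ?intr_int // intrKfloor intrD; lra. Qed.

Lemma frac_small x : 0 <= x < 1 -> frac x = x.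
Proof. by move=> x01; rewrite /frac (@floor_def _ _ 0) ?subr0 ?add0r. Qed.

Lemma frac_fracDl x y : frac (frac x + y) = frac (x + y).
Proof. by rewrite -(fracDz (x + y) (- Num.floor x)) intrN addrAC. Qed.

(* Q/Z, with representatives in [0, 1). *)
Record qmodz := QModZ { qmodz_val : rat; _ : 0 <= qmodz_val < 1 }.

HB.instance Definition _ := [isSub for qmodz_val].
HB.instance Definition _ := [Countable of qmodz by <:].

Definition qmodz_of (x : rat) : qmodz :=
  @QModZ (frac x) (andb_true_intro (conj (frac_ge0 x) (frac_lt1 x))).

Lemma qmodz_valK : cancel qmodz_val qmodz_of.
Proof. by case=> x x01; apply: val_inj; rewrite /= frac_small. Qed.

Lemma qmodz_of_frac x y : frac x = frac y -> qmodz_of x = qmodz_of y.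
Proof. by move=> xy; apply: val_inj. Qed.

Definition qmodz_add a b := qmodz_of (qmodz_val a + qmodz_val b).
Definition qmodz_opp a := qmodz_of (- qmodz_val a).

Lemma qmodz_addA : associative qmodz_add.
Proof.
move=> a b c; apply: qmodz_of_frac => /=.
by rewrite frac_fracDl addrC frac_fracDl [X in frac X]addrC addrA.
Qed.

Lemma qmodz_addC : commutative qmodz_add.
Proof. by move=> a b; rewrite /qmodz_add addrC. Qed.

Lemma qmodz_add0 : left_id (qmodz_of 0) qmodz_add.
Proof. by move=> a; rewrite /qmodz_add /= frac_small ?lexx // add0r qmodz_valK. Qed.

Lemma qmodz_addN : left_inverse (qmodz_of 0) qmodz_opp qmodz_add.
Proof. by move=> a; apply: qmodz_of_frac; rewrite /= frac_fracDl addNr. Qed.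

HB.instance Definition _ := GRing.isZmodule.Build qmodz
  qmodz_addA qmodz_addC qmodz_add0 qmodz_addN.

Lemma qmodz_of_is_zmod_morphism : zmod_morphism qmodz_of.
Proof.
move=> x y; apply: qmodz_of_frac => /=.
have -> : - frac y = - y + (Num.floor y)%:~R by rewrite /frac opprB addrC.
by rewrite fracDz (frac_fracDl x) addrC [in RHS]addrC frac_fracDl.
Qed.

HB.instance Definition _ := GRing.isZmodMorphism.Build rat qmodz qmodz_of
  qmodz_of_is_zmod_morphism.

Lemma qmodz_of_int (m : int) : qmodz_of m%:~R = 0.
Proof. by apply: val_inj; rewrite /= -[m%:~R]add0r fracDz frac_small ?lexx. Qed.

Lemma qmodz_divisible (a : qmodz) (d : nat) : (0 < d)%N -> exists b, b *+ d = a.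
Proof.
move=> d_gt0; exists (qmodz_of (qmodz_val a / d%:R)).
have d_neq0 : d%:R != 0 :> rat by rewrite pnatr_eq0 -lt0n.
by rewrite -raddfMn /= -[_ *+ d]mulr_natr mulfVK ?qmodz_valK.
Qed.

Lemma qmodz_torsion (d : nat) : d != 1%N -> exists2 xi : qmodz, xi != 0 & xi *+ d = 0.
Proof.
case: d => [_|d d1]; first by exists (qmodz_of (1 / 2)).
have d_gt1 : 1 < d.+1%:R :> rat by rewrite ltr1n; case: d d1.
exists (qmodz_of d.+1%:R^-1).
  apply/eqP => /(congr1 val) /=; rewrite !frac_small ?lexx //; last first.
    by rewrite invr_ge0 ler0n invf_lt1 //; lra.
  by move/eqP; rewrite invr_eq0 pnatr_eq0.
by rewrite -raddfMn /= -[_ *+ _]mulr_natr mulVf ?pnatr_eq0 // -[1]/(1%:~R) qmodz_of_int.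
Qed.

Local Open Scope classical_set_scope.

Section Subgroups.
Variable V : zmodType.

Definition subgroup (G : set V) := G 0 /\ forall x y, G x -> G y -> G (x - y).

Variables (G : set V) (G_sub : subgroup G).

Lemma subgroupN x : G x -> G (- x).
Proof. by move=> Gx; rewrite -sub0r; apply: G_sub.2 => //; exact: G_sub.1. Qed.

Lemma subgroupD x y : G x -> G y -> G (x + y).
Proof. by move=> Gx Gy; rewrite -[y]opprK; apply: G_sub.2 => //; exact: subgroupN. Qed.

Lemma subgroupMn x n : G x -> G (x *+ n).
Proof.
move=> Gx; elim: n => [|n Gxn]; first by rewrite mulr0n; exact: G_sub.1.
by rewrite mulrS; exact: subgroupD.
Qed.

Lemma subgroupMz x t : G x -> G (x *~ t).
Proof.
by case: t => m Gx; rewrite ?NegzE ?mulrNz; [|apply: subgroupN]; apply: subgroupMn.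
Qed.

End Subgroups.

Lemma int_subgroup_cyclic (J : set int) :
  subgroup J -> exists2 d : nat, J d%:Z & forall t, J t -> (d %| t)%Z.
Proof.
move=> J_sub; have [dP|noJ] := pselect (exists m : nat, (0 < m)%N && `[< J m%:Z >]).
  case: (ex_minnP dP) => d /andP[d_gt0 /asboolP Jd] d_min.
  exists d => // t Jt; apply/dvdz_mod0P/eqP/contraT => mod_neq0.
  have J_mod : J (t %% d)%Z.
    have -> : (t %% d)%Z = t - d%:Z *~ (t %/ d)%Z by rewrite -mulrzr intz mulrC; lia.
    by apply: J_sub.2 => //; exact: (subgroupMz J_sub).
  have mod_ge0 : 0 <= (t %% d)%Z by apply: modz_ge0; rewrite eqz_nat -lt0n.
  have : (d <= `|(t %% d)%Z|)%N.
    by apply: d_min; rewrite absz_gt0 mod_neq0; apply/asboolP; rewrite gez0_abs.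
  have := @ltz_pmod t d; lia.
exists 0%N; first by case: J_sub.
move=> t Jt; have [->|t_neq0] := eqVneq t 0; first exact: dvdzz.
exfalso; apply: noJ; exists `|t|%N; rewrite absz_gt0 t_neq0; apply/asboolP.
rewrite abszE; case: (ltgtP t 0) t_neq0 => // t_sgn _; last by rewrite gtr0_norm.
by rewrite ltr0_norm //; exact: (subgroupN J_sub Jt).
Qed.

Section PartialHomExtension.
Variable N : zmodType.
Implicit Types (G : set (N * qmodz)) (y : N) (xi : qmodz).

(* A single-valued subgroup of N * Q/Z is the graph of an additive map defined
   on a subgroup of N. *)
Definition single_valued G := forall a, G (0, a) -> a = 0.

Lemma subgroup_graphMz G x a t : subgroup G -> G (x, a) -> G (x *~ t, a *~ t).
Proof.
move=> G_sub /(subgroupMz G_sub t).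
by rewrite (surjective_pairing ((x, a) *~ t)) (raddfMz fst) (raddfMz snd).
Qed.

Lemma single_valued_eq G x a b :
  subgroup G -> single_valued G -> G (x, a) -> G (x, b) -> a = b.
Proof.
move=> G_sub G_sv Ga Gb; apply/eqP; rewrite -subr_eq0; apply/eqP/G_sv.
by rewrite -(subrr x); exact: (G_sub.2 _ _ Ga Gb).
Qed.

Lemma adjoin_value G y : subgroup G -> single_valued G ->
  exists xi, forall t b, G (y *~ t, b) -> b = xi *~ t.
Proof.
move=> G_sub G_sv.
have J_sub : subgroup [set t | exists b, G (y *~ t, b)].
  split; first by exists 0; rewrite mulr0z; exact: G_sub.1.
  move=> t1 t2 [b1 G1] [b2 G2]; exists (b1 - b2); rewrite mulrzBr.
  exact: (G_sub.2 _ _ G1 G2).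
have [d [bd Gd] d_dvd] := int_subgroup_cyclic J_sub.
have [d0|d_gt0] := posnP d.
  exists 0 => t b Gb; have /dvdzP[q t_eq] := d_dvd t (ex_intro _ b Gb).
  by move: Gb; rewrite t_eq d0 mulr0 mulr0z mul0rz; exact: G_sv.
have [xi xid] := qmodz_divisible bd d_gt0; exists xi => t b Gb.
have /dvdzP[q t_eq] := d_dvd t (ex_intro _ b Gb).
have Gqd := subgroup_graphMz q G_sub Gd.
rewrite -mulrzA mulrC -t_eq in Gqd.
by rewrite (single_valued_eq G_sub G_sv Gb Gqd) -xid t_eq mulrC mulrzA.
Qed.

Definition adjoin G y xi : set (N * qmodz) :=
  [set p | exists x a t, G (x, a) /\ p = (x + y *~ t, a + xi *~ t)].

Lemma adjoin_subgroup G y xi : subgroup G -> subgroup (adjoin G y xi).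
Proof.
move=> G_sub; split.
  by exists 0, 0, 0; split; [exact: G_sub.1 | rewrite !mulr0z !addr0].
move=> _ _ [x1 [a1 [t1 [G1 ->]]]] [x2 [a2 [t2 [G2 ->]]]].
exists (x1 - x2), (a1 - a2), (t1 - t2); split; first exact: (G_sub.2 _ _ G1 G2).
by rewrite !mulrzBr; congr (_, _); rewrite /= opprD addrACA.
Qed.

Lemma adjoin_single_valued G y xi : subgroup G -> single_valued G ->
  (forall t b, G (y *~ t, b) -> b = xi *~ t) -> single_valued (adjoin G y xi).
Proof.
move=> G_sub G_sv xiP _ [x [a [t [Ga [x_eq ->]]]]].
have x_eq' : x = y *~ (- t) by rewrite mulrNz; apply/eqP; rewrite -addr_eq0 -x_eq.
by move: Ga; rewrite x_eq' => /xiP ->; rewrite mulrNz addNr.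
Qed.

Lemma adjoin_subset G y xi : subgroup G -> G `<=` adjoin G y xi.
Proof. by move=> G_sub [x a] Ga; exists x, a, 0; rewrite !mulr0z !addr0. Qed.

Lemma adjoin_generator G y xi : subgroup G -> adjoin G y xi (y, xi).
Proof. by move=> G_sub; exists 0, 0, 1; split; [exact: G_sub.1 | rewrite !add0r]. Qed.

Definition extends G X := [/\ subgroup X, single_valued X & G `<=` X].

(* The empty set is admitted, as the union of the empty chain in Zorn's lemma. *)
Lemma bigcup_extends G (F : set (set (N * qmodz))) :
  F `<=` [set X | X = set0 \/ extends G X] -> total_on F subset ->
  \bigcup_(X in F) X = set0 \/ extends G (\bigcup_(X in F) X).
Proof.
move=> FP F_tot.
have [[X0 [p0 [FX0 X0p0]]]|F0] := pselect (exists X p, F X /\ X p); last first.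
  by left; apply/seteqP; split=> // p [X FX Xp]; apply: F0; exists X, p.
have extF X p : F X -> X p -> extends G X by move=> FX Xp; case: (FP _ FX) Xp => // ->.
have [X0_sub _ GX0] := extF _ _ FX0 X0p0.
right; split.
- split; first by exists X0 => //; exact: X0_sub.1.
  move=> p q [X1 F1 X1p] [X2 F2 X2q].
  have [X12|X21] := F_tot _ _ F1 F2.
    have [[_ X2B] _ _] := extF _ _ F2 X2q.
    by exists X2 => //; apply: X2B => //; exact: X12.
  have [[_ X1B] _ _] := extF _ _ F1 X1p.
  by exists X1 => //; apply: X1B => //; exact: X21.
- by move=> a [X FX Xa]; have [_ X_sv _] := extF _ _ FX Xa; exact: X_sv.
- by move=> p Gp; exists X0 => //; exact: GX0.
Qed.

End PartialHomExtension.

Lemma partial_hom_extend (N : zmodType) (G : set (N * qmodz)) :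
  subgroup G -> single_valued G ->
  exists H : {additive N -> qmodz}, forall x a, G (x, a) -> H x = a.
Proof.
move=> G_sub G_sv.
have [A [[A0|[A_sub A_sv GA]] A_max]] := Zorn_bigcup (@bigcup_extends _ G).
  exfalso; apply: (A_max G); last by right; split.
  by rewrite A0; split=> // /(_ (0, 0)); apply; exact: G_sub.1.
have A_total y : exists b, A (y, b).
  apply: contrapT => no_b; have [xi xiP] := adjoin_value y A_sub A_sv.
  apply: (A_max (adjoin A y xi)); last first.
    right; split; [exact: adjoin_subgroup | exact: adjoin_single_valued |].
    exact: (subset_trans GA (adjoin_subset _ _ A_sub)).
  split; first exact: adjoin_subset.
  by move=> /(_ _ (adjoin_generator y xi A_sub)) Ayxi; apply: no_b; exists xi.
pose H y := projT1 (cid (A_total y)).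
have AH y : A (y, H y) by rewrite /H; case: cid.
have H_additive : zmod_morphism H.
  move=> x y; apply: (single_valued_eq A_sub A_sv (AH _)).
  exact: (A_sub.2 _ _ (AH x) (AH y)).
exists (HB.pack_for {additive N -> qmodz} H
  (GRing.isZmodMorphism.Build N qmodz H H_additive)) => x a Ax.
exact: (single_valued_eq A_sub A_sv (AH x) (GA _ Ax)).
Qed.

Lemma qmodz_separate (N : zmodType) (K : set N) c : subgroup K -> ~ K c ->
  exists2 H : {additive N -> qmodz}, (forall x, K x -> H x = 0) & H c != 0.
Proof.
move=> K_sub Kc.
have J_sub : subgroup [set t | K (c *~ t)].
  split; first by rewrite /= mulr0z; exact: K_sub.1.
  by move=> t1 t2 K1 K2; rewrite /= mulrzBr; exact: K_sub.2.
have [d Jd d_dvd] := int_subgroup_cyclic J_sub.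
have [|xi xi_neq0 xid] := @qmodz_torsion d.
  by apply/eqP => d1; apply: Kc; move: Jd; rewrite d1 /= mulr1z.
pose G0 : set (N * qmodz) := [set p | K p.1 /\ p.2 = 0].
have G0_sub : subgroup G0.
  split; first by split=> //; exact: K_sub.1.
  by move=> [x a] [y b] [Kx /= ->] [Ky /= ->]; split; [exact: K_sub.2 | exact: subrr].
have G0_sv : single_valued G0 by move=> a [].
have xiP t b : G0 (c *~ t, b) -> b = xi *~ t.
  move=> [/d_dvd /dvdzP[q ->] /= ->].
  by rewrite mulrC mulrzA -pmulrn xid mul0rz.
have [H HP] := partial_hom_extend (adjoin_subgroup c xi G0_sub)
  (adjoin_single_valued G0_sub G0_sv xiP).
exists H => [x Kx|]; first exact/HP/adjoin_subset.
by rewrite (HP _ _ (adjoin_generator c xi G0_sub)).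
Qed.

Section CharacterModule.
Variable R : pzRingType.

Definition additive_fun : {pred R -> qmodz} := fun f => `[< zmod_morphism f >].

Lemma additive_fun_zmod_closed : zmod_closed additive_fun.
Proof.
split; first by apply/asboolP => x y; rewrite subr0.
move=> f g /asboolP fB /asboolP gB; apply/asboolP => x y.
change (f (x - y) - g (x - y) = f x - g x - (f y - g y)).
by rewrite fB gB !opprB !addrA [LHS]addrAC [RHS]addrAC (addrAC (f x)).
Qed.

HB.instance Definition _ := GRing.isZmodClosed.Build (R -> qmodz) additive_fun
  additive_fun_zmod_closed.

Record character := Character { char_val :> R -> qmodz; _ : char_val \in additive_fun }.

HB.instance Definition _ := [isSub for char_val].
HB.instance Definition _ := [Choice of character by <:].
HB.instance Definition _ := [SubChoice_isSubZmodule of character by <:].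

Lemma characterB (f : character) : zmod_morphism f.
Proof. by case: f => f fP; apply/asboolP. Qed.

HB.instance Definition _ (f : character) :=
  GRing.isZmodMorphism.Build R qmodz (char_val f) (characterB f).

Lemma char_scale_additive (a : R^c) (f : character) :
  (fun r => f ((a : R) * r)) \in additive_fun.
Proof. by apply/asboolP => x y; rewrite mulrBr characterB. Qed.

Definition char_scale a f := Character (char_scale_additive a f).

Lemma char_scaleA a b f : char_scale a (char_scale b f) = char_scale (a * b) f.
Proof.
(* the product a * b of R^c is b * a in R *)
apply: val_inj; apply: funext => r.
change (f (@GRing.mul R b (@GRing.mul R a r)) = f (@GRing.mul R (@GRing.mul R b a) r)).
by rewrite mulrA.
Qed.

Lemma char_scale1 : left_id 1 char_scale.
Proof. by move=> f; apply: val_inj; apply: funext => r /=; rewrite mul1r. Qed.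

Lemma char_scaleDr : right_distributive char_scale +%R.
Proof. by move=> a f g; apply: val_inj; apply: funext => r. Qed.

Lemma char_scaleDl f : {morph char_scale^~ f : a b / a + b}.
Proof.
move=> a b; apply: val_inj; apply: funext => r /=.
by rewrite mulrDl raddfD.
Qed.

HB.instance Definition _ := GRing.Zmodule_isLmodule.Build R^c character
  char_scaleA char_scale1 char_scaleDr char_scaleDl.

End CharacterModule.
Arguments additive_fun {R}.

Lemma char_scaleE (R : pzRingType) (a : R^c) (f : character R) r :
  (a *: f) r = f ((a : R) * r).
Proof. by []. Qed.

Lemma character_injective (R : pzRingType) : injective_rmod (character R).
Proof.
move=> M N j g j_lin j_inj g_lin.
(* extend j m |-> g m 1 to an additive H on N, and map y to r |-> H (r y) *)
pose G : set (N * qmodz) := [set p | exists m, p = (j m, g m 1)].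
have G_sub : subgroup G.
  split; first by exists 0; rewrite (Rlinear0 j_lin) (Rlinear0 g_lin).
  move=> _ _ [m1 ->] [m2 ->]; exists (m1 - m2).
  by rewrite (RlinearB j_lin) (RlinearB g_lin).
have G_sv : single_valued G.
  move=> a [m [jm0 ->]]; have m0 : m = 0 by apply: j_inj; rewrite (Rlinear0 j_lin).
  by rewrite m0 (Rlinear0 g_lin).
have [H HG] := partial_hom_extend G_sub G_sv.
have h_additive (y : N) : (fun r : R => H ((r : R^c) *: y)) \in additive_fun.
  by apply/asboolP => r s; rewrite scalerBl raddfB.
exists (fun y => Character (h_additive y)); split.
  move=> a x y; apply: val_inj; apply: funext => r /=.
  by rewrite scalerDr scalerA raddfD.
move=> m; apply: val_inj; apply: funext => r /=.
rewrite -(RlinearZ j_lin) (HG _ (g ((r : R^c) *: m) 1)); last by exists ((r : R^c) *: m).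
by rewrite (RlinearZ g_lin) char_scaleE mulr1.
Qed.

Lemma char_sumE (R : pzRingType) I (r : seq I) (F : I -> character R) x :
  (\sum_(i <- r) F i) x = \sum_(i <- r) F i x.
Proof. by elim: r => [|i r IH]; rewrite ?big_nil ?big_cons //= -IH. Qed.

(** * Injective modules *)

Lemma tens_mapE (R : pzRingType) (I : lmodType R^c) a b (A : 'M[R]_(a, b))
    (x : 'I_a -> I) :
  tens_map A x =1 mxact (A : 'M[R^c]_(a, b))^T x.
Proof. by move=> j; apply: eq_bigr => k _; rewrite mxE. Qed.

Lemma tens_mapM (R : pzRingType) (I : lmodType R^c) a b c
    (A : 'M[R]_(a, b)) (B : 'M[R]_(b, c)) (x : 'I_a -> I) :
  tens_map B (tens_map A x) =1 tens_map (A *m B) x.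
Proof.
move=> j; rewrite tens_mapE (funext (tens_mapE A x)) mxactM tens_mapE.
by rewrite -trmx_mul_rev.
Qed.

Section ImageSubmodule.
Variables (K : pzRingType) (V W : lmodType K) (f : {linear V -> W}).

Definition range_pred : {pred W} := fun w => `[< exists v, f v = w >].

Lemma range_submod_closed : submod_closed range_pred.
Proof.
split; first by apply/asboolP; exists 0; rewrite linear0.
move=> a _ _ /asboolP[v <-] /asboolP[v' <-]; apply/asboolP.
by exists (a *: v + v'); rewrite linearP.
Qed.

HB.instance Definition _ := GRing.isSubmodClosed.Build K W range_pred
  range_submod_closed.

Record image_sub := ImageSub { image_val :> W; _ : image_val \in range_pred }.

HB.instance Definition _ := [isSub for image_val].
HB.instance Definition _ := [Choice of image_sub by <:].
HB.instance Definition _ := [SubChoice_isSubLmodule of image_sub by <:].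

Lemma image_val_linear : Rlinear image_val.
Proof. by []. Qed.

Lemma range_pred_image v : f v \in range_pred.
Proof. by apply/asboolP; exists v. Qed.

Lemma image_preimage (w : image_sub) : {v | f v = val w}.
Proof. by apply: cid; case: w => w wP; apply/asboolP. Qed.

End ImageSubmodule.

Lemma injective_rmod_factor (R : pzRingType) (I V W : lmodType R^c)
    (f : V -> W) (phi : V -> I) :
  injective_rmod I -> Rlinear f -> Rlinear phi -> (forall v, f v = 0 -> phi v = 0) ->
  exists psi : W -> I, Rlinear psi /\ forall v, psi (f v) = phi v.
Proof.
move=> I_inj f_lin phi_lin phi_ker.
pose fL := HB.pack_for {linear V -> W} f (GRing.isLinear.Build _ _ _ _ f f_lin).
pose g (w : image_sub fL) := phi (sval (image_preimage w)).
have gE (w : image_sub fL) v : f v = val w -> g w = phi v.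
  rewrite /g; case: image_preimage => v' /= fv' fv; apply/eqP; rewrite -subr_eq0.
  by rewrite -(RlinearB phi_lin) phi_ker // (RlinearB f_lin) fv fv' subrr.
have g_lin : Rlinear g.
  move=> a w1 w2; rewrite /g; case: (image_preimage w1) => v1 /= fv1.
  case: (image_preimage w2) => v2 /= fv2; rewrite -phi_lin; apply: gE.
  by rewrite f_lin fv1 fv2.
have [psi [psi_lin psiE]] := I_inj _ _ _ g (@image_val_linear _ _ _ fL) val_inj g_lin.
exists psi; split=> // v.
by rewrite -[f v]/(val (ImageSub (range_pred_image fL v))) psiE; apply: gE.
Qed.

Section RightColumns.
Variable R : pzRingType.

(* Columns R^p form a right R-module, i.e. an R^c-module; colmul A is left
   multiplication by A. *)
Definition colmul m p (A : 'M[R]_(m, p)) (v : 'I_p -> R^c^o) : 'I_m -> R^c^o :=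
  fun l => \sum_k A l k * v k.

Lemma colmul_linear m p (A : 'M[R]_(m, p)) : Rlinear (colmul A).
Proof.
move=> a v w; apply: funext => l.
change (\sum_k A l k * ((v k : R) * (a : R) + w k)
  = (\sum_k A l k * v k) * (a : R) + \sum_k A l k * w k).
rewrite big_distrl -big_split /=.
by apply: eq_bigr => k _; rewrite mulrDr mulrA.
Qed.

Lemma colmul_single1 m p (A : 'M[R]_(m, p)) k : colmul A (single k 1) = fun l => A l k.
Proof.
apply: funext => l; rewrite /colmul (bigD1 k) //= /single eqxx mulr1 big1 ?addr0 // => j.
by move=> /negbTE ->; rewrite mulr0.
Qed.

Lemma sum_scale_single1 m (c : 'I_m -> R) : \sum_l (c l : R^c) *: single l (1 : R^c^o) = c.
Proof.
rewrite -[RHS]sum_single; apply: eq_bigr => l _; apply: funext => l'.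
rewrite scalrfctE /single; case: ifP => _; last exact: scaler0.
by change (1 * c l = c l); rewrite mul1r.
Qed.

End RightColumns.

Lemma tensor_exact_of_dual (R : pzRingType) (n : int -> nat)
    (D : forall i : int, 'M[R]_(n (i + 1), n i)) (I : lmodType R^c) :
  exact_free D -> dual_exact D R^o -> injective_rmod I -> tensor_exact D I.
Proof.
move=> L_exact dualR I_inj i; split=> [u j|x x_cycle].
  rewrite tens_mapM exact_free_mul0 // /tens_map big1 // => k _.
  by rewrite mxE scale0r.
pose phi (v : 'I_(n (i + 1)) -> R^c^o) : I := \sum_k (v k : R^c) *: x k.
have phi_lin : Rlinear phi.
  move=> a v w; rewrite /phi scaler_sumr -big_split; apply: eq_bigr => k _.
  by rewrite scalerDl scalerA.
have phi_ker v : colmul (D (i + 1)) v = 0 -> phi v = 0.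
  move=> v_cycle; have [l|b vb] := dualR i (v : 'I_(n (i + 1)) -> R^o).
    by rewrite -[LHS]/(colmul (D (i + 1)) v l) v_cycle.
  have vE k : (v k : R^c) = \sum_j (b j : R^c) * (D i k j : R^c) by exact: vb k.
  rewrite /phi; under eq_bigr do rewrite vE scaler_suml.
  rewrite exchange_big big1 // => j _.
  under eq_bigr do rewrite -scalerA.
  by rewrite -scaler_sumr -/(tens_map (D i) x j) x_cycle scaler0.
have [psi [psi_lin psiE]] :=
  injective_rmod_factor I_inj (colmul_linear (D (i + 1))) phi_lin phi_ker.
exists (fun l => psi (single l 1)) => k.
rewrite /tens_map; under eq_bigr do rewrite -(RlinearZ psi_lin).
rewrite -(Rlinear_sum psi_lin) sum_scale_single1 -colmul_single1 psiE /phi (bigD1 k) //=.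
rewrite /single eqxx scale1r big1 ?addr0 // => j /negbTE ->.
exact: scale0r.
Qed.

Lemma dual_exact_of_tensor (R : pzRingType) (n : int -> nat)
    (D : forall i : int, 'M[R]_(n (i + 1), n i)) :
  (forall I : lmodType R^c, injective_rmod I -> tensor_exact D I) -> dual_exact D R^o.
Proof.
move=> tensor i c c_cycle.
have [//|c_notin] := pselect (exists b, forall k, c k = mxact (D i) b k); exfalso.
pose K : set ('I_(n (i + 1)) -> R^o) := [set w | exists b, forall k, w k = mxact (D i) b k].
have K_sub : subgroup K.
  split; first by exists 0 => k; rewrite /mxact big1 // => j _; rewrite scaler0.
  move=> w1 w2 [b1 w1E] [b2 w2E]; exists (b1 - b2) => k.
  change (w1 k - w2 k = mxact (D i) (b1 - b2) k).
  by rewrite w1E w2E /mxact -sumrB; apply: eq_bigr => j _; rewrite scalerBr.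
have [H H_K Hc] := qmodz_separate K_sub c_notin.
have x_additive k : (fun r : R => H (single k (r : R^o))) \in additive_fun.
  by apply/asboolP => r s; rewrite !raddfB.
pose x k := Character (x_additive k).
have [|u ux] := (tensor _ (@character_injective R) i).2 x.
  move=> j; apply: val_inj; apply: funext => r; rewrite /tens_map /= char_sumE.
  under eq_bigr do rewrite char_scaleE /=.
  rewrite -raddf_sum; apply: H_K; exists (single j r) => k.
  rewrite sum_single /mxact (bigD1 j) //= /single eqxx big1 ?addr0 // => j' /negbTE ->.
  exact: scaler0.
apply/negP: Hc; rewrite -[c]sum_single raddf_sum.
under eq_bigr => k _ do rewrite -[H _]/(x k (c k)) -ux /tens_map char_sumE.
rewrite exchange_big big1 // => l _.
under eq_bigr do rewrite char_scaleE.
have cl : \sum_k D (i + 1) l k * c k = 0 := c_cycle l.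
by rewrite -raddf_sum cl raddf0.
Qed.

Unset Implicit Arguments.

Theorem lemma3p4 (R : pzRingType) (n : int -> nat)
    (D : forall i : int, 'M[R]_(n (i + 1), n i)) :
  exact_free D ->
  [/\ (hom_exact D R^o <-> (forall Q : lmodType R, projective_lmod Q -> hom_exact D Q)),
      ((forall Q : lmodType R, projective_lmod Q -> hom_exact D Q) <->
       (forall I : lmodType R^c, injective_rmod I -> tensor_exact D I)) &
      ((forall I : lmodType R^c, injective_rmod I -> tensor_exact D I) <->
       hom_exact D R^o)].
Proof.
move=> L_exact; have dualP Q := hom_exact_dual L_exact Q.
have hom_proj : hom_exact D R^o ->
    forall Q : lmodType R, projective_lmod Q -> hom_exact D Q.
  move=> /dualP dualR Q /projective_free_retract[h [h_lin hK]]; apply/dualP.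
  exact: (dual_exact_retract (@free_sum_linear _ Q) h_lin hK (dual_exact_free dualR)).
have proj_hom : (forall Q : lmodType R, projective_lmod Q -> hom_exact D Q) ->
    hom_exact D R^o by apply; exact: regular_projective.
have hom_tensor : hom_exact D R^o ->
    forall I : lmodType R^c, injective_rmod I -> tensor_exact D I.
  by move=> /dualP dualR I; exact: (tensor_exact_of_dual L_exact dualR).
have tensor_hom : (forall I : lmodType R^c, injective_rmod I -> tensor_exact D I) ->
    hom_exact D R^o by move=> /dual_exact_of_tensor /dualP.
split; split.
- exact: hom_proj.
- exact: proj_hom.
- by move/proj_hom; exact: hom_tensor.
- by move/tensor_hom; exact: hom_proj.
- exact: tensor_hom.
- exact: hom_tensor.
Qed.
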